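(* Let $\mathrm{BS}$ be the Biggs-Smith graph and let $u$ be any vertex; write $D_j(u)=\{w:\operatorname{dist}(w,u)=j\}$. (1) For each $4\le i\le 6$ and each edge $(x,y)$ with $x,y\in D_i(u)$, the $(x,u)$-geodesic and the $(y,u)$-geodesic first meet at a vertex of $D_{i-4}(u)$. (2) Let $(x,y)$ be an edge with $x,y\in D_6(u)$. Then the 4-displaced paths from $x$ to $u$ and from $y$ to $u$ meet only at $u$.
   Context: The Biggs-Smith graph $\mathrm{BS}$ is the cubic graph on the $102$ vertices $ia,ib,ic,id,ie,if$ for $i\in\{1,\dots,17\}$ (indices taken modulo 17, with $0$ written as $17$), whose edges are: $ie\,ia$, $ie\,ib$, $ie\,if$, $if\,ic$, $if\,id$ for each $i$; and $ia\,(i+1)a$, $ib\,(i+4)b$, $ic\,(i+2)c$, $id\,(i+8)d$ for each $i$. In $\mathrm{BS}$, for every vertex $u$ and every $w$ with $1\le \operatorname{dist}(w,u)\le 6$ the $(w,u)$-geodesic (shortest path) is unique, and each $D_j(u)$ with $4\le j\le 6$ induces a perfect matching. For $x\in D_6(u)$, the 4-displaced path from $x$ to $u$ is the path that follows the $(x,u)$-geodesic down to its vertex in $D_4(u)$, then takes the unique edge inside $D_4(u)$ at that vertex to a vertex $z$, and then follows the $(z,u)$-geodesic to $u$. *)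

From mathcomp Require Import all_boot.
Set Implicit Arguments. Unset Strict Implicit. Unset Printing Implicit Defensive.

(* Vertices of the Biggs-Smith graph: pairs (i, l) with i : 'I_17 the index
   modulo 17 (the paper's index 17 is represented by 0) and l : 'I_6 the
   letter, with a,b,c,d,e,f encoded as 0,1,2,3,4,5. *)
Definition BSvert := ('I_17 * 'I_6)%type.

Definition lA : nat := 0.
Definition lB : nat := 1.
Definition lC : nat := 2.
Definition lD : nat := 3.
Definition lE : nat := 4.
Definition lF : nat := 5.

(* The generating (oriented) edge list of the paper:
   ie-ia, ie-ib, ie-if, if-ic, if-id, ia-(i+1)a, ib-(i+4)b, ic-(i+2)c,
   id-(i+8)d. *)
Definition BSgen (v w : BSvert) : bool :=
  let: (i, l) := v in let: (j, m) := w in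
  [|| [&& val l == lE, val m == lA & j == i],
      [&& val l == lE, val m == lB & j == i],
      [&& val l == lE, val m == lF & j == i],
      [&& val l == lF, val m == lC & j == i],
      [&& val l == lF, val m == lD & j == i],
      [&& val l == lA, val m == lA & val j == (val i + 1) %% 17],
      [&& val l == lB, val m == lB & val j == (val i + 4) %% 17],
      [&& val l == lC, val m == lC & val j == (val i + 2) %% 17]
    | [&& val l == lD, val m == lD & val j == (val i + 8) %% 17]].

Definition BSadj : rel BSvert := fun v w => BSgen v w || BSgen w v.

Fixpoint ball (n : nat) (x : BSvert) : {set BSvert} :=
  match n with
  | 0 => [set x]
  | n'.+1 => ball n' x :|: [set z | [exists w in ball n' x, BSadj w z]]
  end.

(* Graph distance (the graph has 102 vertices, so every finite distance
   is < #|BSvert|). *)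
Definition dist (x y : BSvert) : nat :=
  find (fun n => y \in ball n x) (iota 0 #|{: BSvert}|).

Definition geodesic (x : BSvert) (p : seq BSvert) (u : BSvert) : bool :=
  [&& path BSadj x p, last x p == u & size p == dist x u].

Definition first_meet (x : BSvert) (px : seq BSvert) (y : BSvert)
    (py : seq BSvert) : BSvert :=
  nth x (x :: px) (find (fun w => w \in y :: py) (x :: px)).

(* q (a vertex sequence starting at x) is a 4-displaced path from x to u:
   follow the (x,u)-geodesic down to its vertex in D_4(u), take an edge
   inside D_4(u) to z, then follow the (z,u)-geodesic to u. *)
Definition displaced4 (u x : BSvert) (q : seq BSvert) : Prop :=
  exists (px : seq BSvert) (z : BSvert) (pz : seq BSvert),
    [/\ geodesic x px u,
        dist (nth x (x :: px) (dist x u - 4)) u = 4,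
        BSadj (nth x (x :: px) (dist x u - 4)) z &
        dist z u = 4 /\
        geodesic z pz u /\
        q = take (dist x u - 4).+1 (x :: px) ++ z :: pz].

From mathcomp Require Import all_boot zify.
Set Implicit Arguments. Unset Strict Implicit. Unset Printing Implicit Defensive.

(* Both claims are finite statements about a 102-vertex graph, checked by
   computation for every root u.  A breadth-first search from u proposes a
   labelling d; it is certified to equal dist _ u by local conditions alone
   (d u = 0, every other vertex has a neighbour one level lower, and d grows
   by at most 1 along an edge).  Every vertex at level 1..6 also has a unique
   lower neighbour, so each geodesic to u of length at most 6 is the chain of
   parents; the two claims thus become checks on parent chains. *)

Definition ordmod (n k : nat) : 'I_n.+1 := Ordinal (ltn_pmod k (ltn0Sn n)).

Lemma ordmodK n (i : 'I_n.+1) : ordmod n i = i.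
Proof. by apply: val_inj; rewrite /= modn_small. Qed.

Definition code (v : BSvert) : nat := v.1 * 6 + v.2.

Definition decode (k : nat) : BSvert := (ordmod 16 (k %/ 6), ordmod 5 (k %% 6)).

Lemma codeK : cancel code decode.
Proof.
case=> i l; rewrite /code /decode /= divnMDl // modnMDl.
by rewrite divn_small ?modn_small // addn0 !ordmodK.
Qed.

Lemma code_lt v : code v < 102.
Proof. by case: v => i l; have := ltn_ord i; have := ltn_ord l; rewrite /code /=; lia. Qed.

(* An explicit enumeration: the finType enumeration of BSvert does not
   evaluate efficiently under vm_compute. *)
Definition vertices : seq BSvert := mkseq decode 102.

Lemma nth_vertices_code v0 v : nth v0 vertices (code v) = v.
Proof. by rewrite nth_mkseq ?codeK ?code_lt. Qed.

Lemma mem_vertices v : v \in vertices.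
Proof. by rewrite -(nth_vertices_code v v) mem_nth // size_mkseq code_lt. Qed.

Lemma card_BSvert : #|{: BSvert}| = 102.
Proof. by rewrite card_prod !card_ord. Qed.

Definition tabulate (A : Type) (f : BSvert -> A) : seq A := map f vertices.

Definition lookup (A : Type) (a : A) (table : seq A) (v : BSvert) : A :=
  nth a table (code v).

Lemma lookup_tabulate (A : Type) (a : A) (f : BSvert -> A) v :
  lookup a (tabulate f) v = f v.
Proof. by rewrite /lookup (nth_map v) ?nth_vertices_code // size_mkseq code_lt. Qed.

(* vm_compute evaluates a global constant such as nbr_table only once, so
   nbrs v is a table lookup. *)
Definition nbr_table : seq (seq BSvert) :=
  tabulate (fun v => [seq w <- vertices | BSadj v w]).

Definition nbrs (v : BSvert) : seq BSvert := lookup [::] nbr_table v.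

Lemma mem_nbrs v w : (w \in nbrs v) = BSadj v w.
Proof. by rewrite /nbrs lookup_tabulate mem_filter mem_vertices andbT. Qed.

Lemma path_last_in_ball x p : path BSadj x p -> last x p \in ball (size p) x.
Proof.
elim/last_ind: p => [|p z IHp] /=; first by rewrite set11.
rewrite rcons_path last_rcons size_rcons => /andP[xp pz] /=.
by apply/setUP; right; rewrite inE; apply/existsP; exists (last x p); rewrite IHp.
Qed.

Lemma ball_path n x y : y \in ball n x ->
  exists p, [/\ path BSadj x p, last x p = y & size p <= n].
Proof.
elim: n y => [|n IHn] y /=; first by rewrite inE => /eqP ->; exists [::].
case/setUP => [/IHn [p [xp <- le_pn]] | ]; first by exists p; split; rewrite ?leqW.
rewrite inE => /existsP [w /andP [/IHn [p [xp pw le_pn]] wy]].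
by exists (rcons p y); rewrite rcons_path last_rcons size_rcons xp pw wy.
Qed.

Lemma find_eq_first (T : Type) (a : pred T) (s : seq T) x0 k :
  k < size s -> a (nth x0 s k) -> (forall j, j < k -> ~~ a (nth x0 s j)) ->
  find a s = k.
Proof.
move=> lt_ks ak before_k; case: (ltngtP (find a s) k) => // [lt_fk | lt_kf].
  have has_as : has a s by rewrite has_find (ltn_trans lt_fk).
  by have := nth_find x0 has_as; rewrite (negbTE (before_k _ lt_fk)).
by have := before_find x0 lt_kf; rewrite ak.
Qed.

Lemma dist_eq_min_path x y n : n < 102 ->
  (exists2 p, path BSadj x p /\ last x p = y & size p = n) ->
  (forall p, path BSadj x p -> last x p = y -> n <= size p) ->
  dist x y = n.
Proof.
move=> lt_n [p [xp py] size_p] shortest; subst n; rewrite /dist card_BSvert.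
apply: (find_eq_first (x0 := 0)); rewrite ?size_iota ?nth_iota //.
  by rewrite -py path_last_in_ball.
move=> j lt_jn; rewrite nth_iota ?(ltn_trans lt_jn) //; apply/negP.
case/ball_path => q [xq qy le_qj].
by have := leq_trans (shortest q xq qy) le_qj; rewrite leqNgt lt_jn.
Qed.

Section LevelCertificate.

Variables (u : BSvert) (d : BSvert -> nat).

Definition is_level_labelling : bool :=
  [&& d u == 0,
      all (fun v => (v == u) || has (fun w => d w + 1 == d v) (nbrs v)) vertices,
      all (fun v => all (fun w => d v <= d w + 1) (nbrs v)) vertices
    & all (fun v => d v < 102) vertices].

Definition lower_nbrs (v : BSvert) : seq BSvert :=
  [seq w <- nbrs v | d w + 1 == d v].

Definition unique_parents : bool :=
  all (fun v => (1 <= d v <= 6) ==> (size (lower_nbrs v) == 1)) vertices.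

Definition parent (v : BSvert) : BSvert := nth v (lower_nbrs v) 0.

Definition parent_chain (v : BSvert) : seq BSvert :=
  traject parent (parent v) (d v).

(* The costly checks are guarded by if-then-else rather than ==>: vm_compute
   evaluates both arguments of implb, so ==> would run them unconditionally. *)
Definition chains_meet_four_below : bool :=
  all (fun x => all (fun y =>
      if (4 <= d x <= 6) && (d y == d x) then
        d (first_meet x (parent_chain x) y (parent_chain y)) == d x - 4
      else true) (nbrs x)) vertices.

Definition ancestor4 (x : BSvert) : BSvert := nth x (x :: parent_chain x) (d x - 4).

Definition displaced_chain (x z : BSvert) : seq BSvert :=
  take (d x - 4).+1 (x :: parent_chain x) ++ z :: parent_chain z.

Definition meet_only_at (r : BSvert) (p q : seq BSvert) : bool :=
  all (fun w => (w \in q) ==> (w == r)) p.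

Lemma meet_only_atP r p q :
  meet_only_at r p q -> forall w, w \in p -> w \in q -> w = r.
Proof. by move=> /allP meet_pq w /meet_pq /implyP qw /qw /eqP. Qed.

Definition displaced_chains_meet_at_root : bool :=
  all (fun x => all (fun y =>
      if (d x == 6) && (d y == 6) then
        all (fun zx => if d zx == 4 then
          all (fun zy => if d zy == 4 then
              meet_only_at u (displaced_chain x zx) (displaced_chain y zy)
            else true) (nbrs (ancestor4 y))
          else true) (nbrs (ancestor4 x))
      else true) (nbrs x)) vertices.

Hypothesis labelling : is_level_labelling.

Lemma level_root : d u = 0.
Proof. by case/and4P: labelling => /eqP. Qed.

Lemma level_descent v : v != u -> exists2 w, BSadj v w & d w + 1 = d v.
Proof.
move=> /negbTE vu; case/and4P: labelling => _ /allP /(_ v (mem_vertices v)) + _ _.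
by rewrite vu => /hasP [w]; rewrite mem_nbrs => vw /eqP; exists w.
Qed.

Lemma level_lipschitz v w : BSadj v w -> d v <= d w + 1.
Proof.
move=> vw; case/and4P: labelling => _ _ /allP /(_ v (mem_vertices v)) /allP lip _.
by apply: lip; rewrite mem_nbrs.
Qed.

Lemma level_lt v : d v < 102.
Proof. by case/and4P: labelling => _ _ _ /allP; apply; apply: mem_vertices. Qed.

Lemma level_le_path v p : path BSadj v p -> last v p = u -> d v <= size p.
Proof.
elim: p v => [|w p IHp] v /=; first by move=> _ ->; rewrite level_root.
case/andP=> vw wp /(IHp _ wp); have := level_lipschitz vw; lia.
Qed.

Lemma descending_path v :
  exists2 p, path BSadj v p /\ last v p = u & size p = d v.
Proof.
have [k dv] : exists k, d v = k by exists (d v).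
rewrite dv; elim: k v dv => [|k IHk] v dv.
  exists [::] => //; split => //=; apply/eqP; apply: contraT => /level_descent.
  by case=> w _; rewrite dv addn1.
have /level_descent [w vw]: v != u by apply/eqP => vu; move: dv; rewrite vu level_root.
rewrite dv addn1 => /eqP; rewrite eqSS => /eqP /IHk [p [wp pu] <-].
by exists (w :: p); rewrite /= ?vw.
Qed.

Lemma dist_level v : dist v u = d v.
Proof. exact: dist_eq_min_path (level_lt v) (descending_path v) (@level_le_path v). Qed.

Hypothesis parents : unique_parents.

Lemma lower_nbr_parent v w :
  1 <= d v <= 6 -> BSadj v w -> d w + 1 = d v -> w = parent v.
Proof.
move=> dv_range vw wv; have /allP /(_ v (mem_vertices v)) := parents.
have : w \in lower_nbrs v by rewrite mem_filter mem_nbrs vw wv eqxx.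
by rewrite dv_range /parent; case: (lower_nbrs v) => [|w' [|]] //; rewrite inE => /eqP.
Qed.

Lemma geodesic_parent_chain v p : d v <= 6 -> geodesic v p u -> p = parent_chain v.
Proof.
move=> le_v6 /and3P [vp /eqP pu /eqP]; rewrite dist_level /parent_chain.
elim: p v le_v6 vp pu => [|w p IHp] v le_v6 /=; first by move=> _ _ <-.
case/andP=> vw wp pu size_v.
have dw : d w = size p.
  by have := level_le_path wp pu; have := level_lipschitz vw; lia.
have <- : w = parent v by apply: lower_nbr_parent => //; lia.
by rewrite -size_v -dw /=; congr cons; apply: IHp => //; lia.
Qed.

Lemma geodesics_first_meet : chains_meet_four_below ->
  forall i x y px py, 4 <= i <= 6 -> BSadj x y ->
  dist x u = i -> dist y u = i -> geodesic x px u -> geodesic y py u ->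
  dist (first_meet x px y py) u = i - 4.
Proof.
move=> /allP meet i x y px py i_range xy; rewrite !dist_level => dx dy gx gy.
have le_i6 : i <= 6 by case/andP: i_range.
rewrite (geodesic_parent_chain _ gx) ?dx // (geodesic_parent_chain _ gy) ?dy //.
have /allP /(_ y) := meet x (mem_vertices x).
by rewrite mem_nbrs dx dy i_range eqxx /= => /(_ xy) /eqP.
Qed.

Lemma displaced4_chain x q : d x <= 6 -> displaced4 u x q ->
  exists2 z, BSadj (ancestor4 x) z /\ d z = 4
           & q = displaced_chain x z.
Proof.
move=> le_x6 [px [z [pz [gx _ xz [dz [gz ->]]]]]].
rewrite !dist_level (geodesic_parent_chain le_x6 gx) in xz dz *.
by exists z; rewrite // (geodesic_parent_chain _ gz) ?dz.
Qed.

Lemma displaced_paths_meet_only_at_root : displaced_chains_meet_at_root ->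
  forall x y qx qy, BSadj x y -> dist x u = 6 -> dist y u = 6 ->
  displaced4 u x qx -> displaced4 u y qy ->
  forall w, w \in qx -> w \in qy -> w = u.
Proof.
move=> /allP disjoint x y qx qy xy; rewrite !dist_level => dx dy.
move=> /(displaced4_chain (eq_leq dx)) [zx [xzx dzx] ->].
move=> /(displaced4_chain (eq_leq dy)) [zy [yzy dzy] ->] w wx wy.
have : meet_only_at u (displaced_chain x zx) (displaced_chain y zy).
  have /allP /(_ y) := disjoint x (mem_vertices x).
  rewrite mem_nbrs dx dy => /(_ xy) /allP /(_ zx).
  rewrite mem_nbrs xzx dzx => /(_ isT) /allP /(_ zy).
  by rewrite mem_nbrs yzy dzy => /(_ isT).
by move/meet_only_atP; apply.
Qed.

End LevelCertificate.

(* The search itself needs no proof: a wrong layering would fail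
   is_level_labelling.  Eight layers suffice since BS has diameter 7. *)
Fixpoint bfs_layers (k : nat) (seen frontier : seq BSvert) : seq (seq BSvert) :=
  if k is k'.+1 then
    let next := undup [seq w <- flatten (map nbrs frontier) | w \notin seen] in
    frontier :: bfs_layers k' (seen ++ next) next
  else [::].

Definition layer_index (layers : seq (seq BSvert)) (v : BSvert) : nat :=
  find (fun layer => v \in layer) layers.

Definition certified_by (u : BSvert) (d : BSvert -> nat) : bool :=
  [&& is_level_labelling u d, unique_parents d,
      chains_meet_four_below d & displaced_chains_meet_at_root u d].

Definition certified (u : BSvert) : bool :=
  certified_by u (lookup 0 (tabulate (layer_index (bfs_layers 8 [:: u] [:: u])))).

Lemma all_certified : all certified vertices.
Proof. by vm_compute. Qed.

Theorem corollary2p6 (u : BSvert) :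
  (forall (i : nat) (x y : BSvert) (px py : seq BSvert),
      4 <= i <= 6 -> BSadj x y -> dist x u = i -> dist y u = i ->
      geodesic x px u -> geodesic y py u ->
      dist (first_meet x px y py) u = i - 4)
  /\
  (forall (x y : BSvert) (qx qy : seq BSvert),
      BSadj x y -> dist x u = 6 -> dist y u = 6 ->
      displaced4 u x qx -> displaced4 u y qy ->
      forall w, w \in qx -> w \in qy -> w = u).
Proof.
have /and4P [labelling parents meet disjoint] : certified_by u _ :=
  allP all_certified u (mem_vertices u).
split; first exact: geodesics_first_meet labelling parents meet.
exact: displaced_paths_meet_only_at_root labelling parents disjoint.
Qed.
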